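(* Let $Y$ be a sofic shift, $d$ a metric for the topology of $X_{\mathbb K(Y)}$, $x \in X_{\mathbb K(Y)}$ and $N\in \mathbb Z$. There is a periodic point $p \in Y$ and an element $x' \in X_{\mathbb K(Y)}$ such that $x'_i = x_i$ for all $i \geq N$ and $\lim_{i \to -\infty} d(\sigma^i(x'),\sigma^i(\alpha_Y(p))) = 0$. In particular, $x' \in \mathcal R(L_{\mathbb K(Y)})$.
   Context: For a sofic shift $Y\subseteq A^{\mathbb Z}$ and $y\in Y$, $F(y)=\{w\in Y[0,\infty): y_{(-\infty,-1]}w\in Y\}$, where $Y[0,\infty)=\{y_{[0,\infty)}:y\in Y\}$. The future cover $(\mathbb K(Y),L_{\mathbb K(Y)})$ is the labeled graph with vertices the distinct sets $F(y)$, $y\in Y$, and an edge labeled $a\in A$ from $F(y)$ to $F(z)$ exactly when $F(z)=\{w\in A^{\mathbb N}: aw\in F(y)\}$ (one edge per such pair and label); $X_{\mathbb K(Y)}$ is its edge shift with shift map $\sigma$, and $L_{\mathbb K(Y)}$ reads labels coordinatewise. $\alpha_Y:Y\to X_{\mathbb K(Y)}$ is the map such that, for each $i$, the $i$-th edge of $\alpha_Y(y)$ has source $F(\sigma^i(y))$ and label $y_i$ (so $L_{\mathbb K(Y)}(\alpha_Y(y))=y$). For $x\in X_{\mathbb K(Y)}$, $\mathbb U(x)=\{z:\exists N\ \forall i\le N,\ z_i=x_i\}$ (similarly in $Y$); $x$ is a regular ray if $L_{\mathbb K(Y)}$ maps $\mathbb U(x)$ onto $\mathbb U(L_{\mathbb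 K(Y)}(x))$, and $\mathcal R(L_{\mathbb K(Y)})$ is the set of regular rays. *)

From Stdlib Require Import ZArith Reals List.
Open Scope Z_scope.

Set Implicit Arguments.

Definition finite_type (T : Type) : Prop := exists l : list T, forall t, In t l.

Definition shiftn {B : Type} (k : Z) (x : Z -> B) : Z -> B := fun j => x (j + k).

Record LGraph (A : Type) := {
  lg_V : Type; lg_E : Type;
  lg_src : lg_E -> lg_V; lg_tgt : lg_E -> lg_V; lg_lab : lg_E -> A;
  lg_Vfin : finite_type lg_V; lg_Efin : finite_type lg_E }.

Definition is_bipath {A} (G : LGraph A) (x : Z -> lg_E G) : Prop :=
  forall i, lg_tgt G (x i) = lg_src G (x (i + 1)).

Definition is_sofic {A : Type} (Y : (Z -> A) -> Prop) : Prop :=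
  finite_type A /\
  exists G : LGraph A, forall y, Y y <->
    exists x, is_bipath G x /\ forall i, y i = lg_lab G (x i).

Definition Yplus {A} (Y : (Z -> A) -> Prop) (w : nat -> A) : Prop :=
  exists y, Y y /\ forall n : nat, w n = y (Z.of_nat n).

Definition glue {A} (y : Z -> A) (w : nat -> A) : Z -> A :=
  fun i => if i <? 0 then y i else w (Z.to_nat i).

Definition follower {A} (Y : (Z -> A) -> Prop) (y : Z -> A) : (nat -> A) -> Prop :=
  fun w => Yplus Y w /\ Y (glue y w).

Definition acons {A} (a : A) (w : nat -> A) : nat -> A :=
  fun n => match n with O => a | S m => w m end.

Definition is_vertex {A} (Y : (Z -> A) -> Prop) (S : (nat -> A) -> Prop) : Prop :=
  exists y, Y y /\ S = follower Y y.

(* an edge of K(Y) is determined by its source vertex and its label;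
   its target is {w | a w in S} *)
Definition KEdge (A : Type) : Type := ((nat -> A) -> Prop) * A.

Definition ke_src {A} (e : KEdge A) : (nat -> A) -> Prop := fst e.
Definition ke_lab {A} (e : KEdge A) : A := snd e.
Definition ke_tgt {A} (e : KEdge A) : (nat -> A) -> Prop :=
  fun w => fst e (acons (snd e) w).

Definition is_edge {A} (Y : (Z -> A) -> Prop) (e : KEdge A) : Prop :=
  is_vertex Y (ke_src e) /\ is_vertex Y (ke_tgt e).

Definition XK {A} (Y : (Z -> A) -> Prop) (x : Z -> KEdge A) : Prop :=
  forall i, is_edge Y (x i) /\ ke_tgt (x i) = ke_src (x (i + 1)).

Definition LK {A} (x : Z -> KEdge A) : Z -> A := fun i => ke_lab (x i).

Definition alphaY {A} (Y : (Z -> A) -> Prop) (y : Z -> A) : Z -> KEdge A :=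
  fun i => (follower Y (shiftn i y), y i).

Definition periodic {A} (p : Z -> A) : Prop :=
  exists k, 0 < k /\ forall i, p (i + k) = p i.

Definition Ul {B} (X : (Z -> B) -> Prop) (x : Z -> B) (z : Z -> B) : Prop :=
  X z /\ exists N, forall i, i <= N -> z i = x i.

Definition regular_ray {A} (Y : (Z -> A) -> Prop) (x : Z -> KEdge A) : Prop :=
  (forall z, Ul (XK Y) x z -> Ul Y (LK x) (LK z)) /\
  (forall y, Ul Y (LK x) y -> exists z, Ul (XK Y) x z /\ LK z = y).

(* d is a metric on X inducing the product topology (discrete factors) *)
Definition metric_on {B} (X : (Z -> B) -> Prop) (d : (Z -> B) -> (Z -> B) -> R) : Prop :=
  (forall x y, X x -> X y -> (0 <= d x y)%R) /\
  (forall x y, X x -> X y -> (d x y = 0%R <-> x = y)) /\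
  (forall x y, X x -> X y -> d x y = d y x) /\
  (forall x y z, X x -> X y -> X z -> (d x z <= d x y + d y z)%R).

Definition compatible_metric {B} (X : (Z -> B) -> Prop)
    (d : (Z -> B) -> (Z -> B) -> R) : Prop :=
  metric_on X d /\
  forall x, X x ->
    (forall eps, (0 < eps)%R -> exists M, forall y, X y ->
        (forall j, - M <= j <= M -> y j = x j) -> (d x y < eps)%R) /\
    (forall M, exists eps, (0 < eps)%R /\ forall y, X y ->
        (d x y < eps)%R -> forall j, - M <= j <= M -> y j = x j).

From Stdlib Require Import ZArith Reals Lia List.
From Stdlib Require Import Classical ClassicalEpsilon FunctionalExtensionality PropExtensionality.
From Stdlib Require FinFun.
Open Scope Z_scope.

(* Present Y as the label image of a finite graph G. For y in Y, the follower
   set F(y) is determined by the set of vertices at which some left-infinite path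
   of G labeled by the past of y ends, and by König's lemma a bounded look-back
   decides membership in that set. Far enough in the past, the pigeonhole
   principle gives times i < j at which a bi-infinite path for y and one chosen
   left path per such vertex each return to the vertex they occupied at i;
   repeating y on [i, j) to the left therefore yields a point z with F(z) = F(y)
   that coincides with a periodic point p left of i. Gluing alpha_Y(z) to x at
   time N gives x', which agrees with alpha_Y(p) on a left half-line. The shifts
   of alpha_Y(p) form a finite set, whence the uniform asymptotics; and a point of
   the edge shift that agrees with some alpha_Y(q) on a left half-line is
   labeled by a point of Y, whence regularity. *)

Lemma pred_ext {T} (P Q : T -> Prop) : (forall t, P t <-> Q t) -> P = Q.
Proof.
  intros H; apply functional_extensionality; intros t.
  apply propositional_extensionality; auto.
Qed.

Lemma list_infinite_pigeonhole {T} (l : list T) (P : T -> nat -> Prop) :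
  (forall t n m, (m <= n)%nat -> P t n -> P t m) ->
  (forall n, exists t, In t l /\ P t n) -> exists t, In t l /\ forall n, P t n.
Proof.
  intros Hanti; induction l as [|a l IH]; intros H.
  - destruct (H 0%nat) as [t [[] _]].
  - destruct (classic (forall n, P a n)) as [Ha|Ha].
    + exists a; split; [left; reflexivity | exact Ha].
    + apply not_all_ex_not in Ha as [n0 Hn0].
      destruct IH as [t [Hin Ht]].
      * intros n; destruct (H (Nat.max n n0)) as [t [[<-|Hin] Ht]].
        -- exfalso; apply Hn0; apply (Hanti _ _ _ (Nat.le_max_r n n0) Ht).
        -- exists t; split; [exact Hin | apply (Hanti _ _ _ (Nat.le_max_l n n0) Ht)].
      * exists t; split; [right; exact Hin | exact Ht].
Qed.

Lemma list_common_bound {T} (l : list T) (Q : T -> nat -> Prop) :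
  (forall t m m', (m <= m')%nat -> Q t m -> Q t m') ->
  (forall t, In t l -> exists m, Q t m) -> exists M, forall t, In t l -> Q t M.
Proof.
  intros Hmono; induction l as [|a l IH]; intros H.
  - exists 0%nat; intros t [].
  - destruct (H a (or_introl eq_refl)) as [ma Ha].
    destruct IH as [M HM]; [intros t Ht; apply H; right; exact Ht |].
    exists (Nat.max ma M); intros t [<-|Ht].
    + apply (Hmono _ _ _ (Nat.le_max_l ma M) Ha).
    + apply (Hmono _ _ _ (Nat.le_max_r ma M) (HM t Ht)).
Qed.

Lemma pigeonhole_nat_list {T} (l : list T) (f : nat -> T) :
  (forall k, In (f k) l) -> exists a b, (a < b)%nat /\ f a = f b.
Proof.
  intros H; apply NNPP; intros Hn.
  assert (Hinj : FinFun.Injective f).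
  { intros a b Hab; destruct (Nat.lt_trichotomy a b) as [Hlt|[Heq|Hgt]]; auto.
    - exfalso; apply Hn; exists a, b; auto.
    - exfalso; apply Hn; exists b, a; auto. }
  assert (Hnd : NoDup (map f (seq 0 (S (length l)))))
    by (apply FinFun.Injective_map_NoDup; [exact Hinj | apply seq_NoDup]).
  apply NoDup_incl_length with (l' := l) in Hnd.
  - rewrite length_map, length_seq in Hnd; lia.
  - intros t Ht; apply in_map_iff in Ht as [k [<- _]]; apply H.
Qed.

Fixpoint words {T} (l : list T) (n : nat) : list (list T) :=
  match n with
  | O => nil :: nil
  | S m => flat_map (fun v => map (cons v) (words l m)) l
  end.

Lemma In_words {T} (l : list T) :
  (forall t, In t l) -> forall w, In w (words l (length w)).
Proof.
  intros Hl w; induction w as [|v w IH]; simpl.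
  - left; reflexivity.
  - apply in_flat_map; exists v; split; [apply Hl | apply in_map, IH].
Qed.

Lemma pigeonhole_family {U} (lv : list U) (fam : list (nat -> U)) :
  (forall v : U, In v lv) ->
  exists a b, (a < b)%nat /\ forall s, In s fam -> s a = s b.
Proof.
  intros Hlv.
  destruct (pigeonhole_nat_list (words lv (length fam)) (fun k => map (fun s => s k) fam))
    as [a [b [Hab Heq]]].
  { intros k; rewrite <- (length_map (fun s => s k) fam); apply In_words, Hlv. }
  exists a, b; split; [exact Hab |].
  clear Hab; induction fam as [|s0 fam IH]; simpl in *; intros s Hs; [contradiction |].
  injection Heq as H0 Hrest; destruct Hs as [<-|Hs]; auto.
Qed.

Section Konig.
Variables (T : Type) (l : list T) (Hl : forall t, In t l).
Variables (init : T -> Prop) (step : nat -> T -> T -> Prop).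

Definition extensible (k : nat) (t : T) : Prop :=
  forall n, exists s : nat -> T,
    s O = t /\ forall j, (j < n)%nat -> step (k + j) (s j) (s (S j)).

Lemma extensible_start :
  (forall n, exists s : nat -> T,
     init (s O) /\ forall j, (j < n)%nat -> step j (s j) (s (S j))) ->
  exists t, init t /\ extensible 0 t.
Proof.
  intros H.
  destruct (list_infinite_pigeonhole l (fun t n => init t /\ exists s : nat -> T,
      s O = t /\ forall j, (j < n)%nat -> step (0 + j) (s j) (s (S j))))
    as [t [_ Ht]].
  - intros t n m Hmn [Hi [s [Hs Hst]]].
    split; [exact Hi |]; exists s; split; [exact Hs |]; intros j Hj; apply Hst; lia.
  - intros n; destruct (H n) as [s [Hi Hs]].
    exists (s O); split; [apply Hl |]; split; [exact Hi |].
    exists s; split; [reflexivity | exact Hs].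
  - exists t; split; [apply (Ht 0%nat) | intros n; apply (Ht n)].
Qed.

Lemma extensible_step k t :
  extensible k t -> exists t', step k t t' /\ extensible (S k) t'.
Proof.
  intros H.
  destruct (list_infinite_pigeonhole l (fun t' n => step k t t' /\ exists s : nat -> T,
      s O = t' /\ forall j, (j < n)%nat -> step (S k + j) (s j) (s (S j))))
    as [t' [_ Ht']].
  - intros t' n m Hmn [Hi [s [Hs Hst]]].
    split; [exact Hi |]; exists s; split; [exact Hs |]; intros j Hj; apply Hst; lia.
  - intros n; destruct (H (S n)) as [s [Hs0 Hs]].
    exists (s 1%nat); split; [apply Hl |]; split.
    + specialize (Hs 0%nat ltac:(lia)); rewrite Nat.add_0_r, Hs0 in Hs; exact Hs.
    + exists (fun j => s (S j)); split; [reflexivity |]; intros j Hj.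
      specialize (Hs (S j) ltac:(lia)); rewrite Nat.add_succ_r in Hs; exact Hs.
  - exists t'; split; [apply (Ht' 0%nat) | intros n; apply (Ht' n)].
Qed.

Lemma konig :
  (forall n, exists s : nat -> T,
     init (s O) /\ forall j, (j < n)%nat -> step j (s j) (s (S j))) ->
  exists f : nat -> T, init (f O) /\ forall k, step k (f k) (f (S k)).
Proof.
  intros H; destruct (extensible_start H) as [t0 [Hi0 Hg0]].
  assert (Hnext : forall kt : nat * T, exists t',
             extensible (fst kt) (snd kt) ->
             step (fst kt) (snd kt) t' /\ extensible (S (fst kt)) t').
  { intros [k t]; simpl; destruct (classic (extensible k t)) as [Hk|Hk].
    - destruct (extensible_step k t Hk) as [t' Ht']; exists t'; intros _; exact Ht'.
    - exists t; intros Hk'; contradiction. }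
  destruct (choice _ Hnext) as [g Hg].
  pose (f := fix f n := match n with O => t0 | S m => g (m, f m) end).
  assert (Hf : forall n, extensible n (f n)).
  { induction n; [exact Hg0 | apply (Hg (n, f n) IHn)]. }
  exists f; split; [exact Hi0 | intros k; exact (proj1 (Hg (k, f k) (Hf k)))].
Qed.
End Konig.

Lemma shiftn_add {B} (a b : Z) (y : Z -> B) : shiftn a (shiftn b y) = shiftn (a + b) y.
Proof. apply functional_extensionality; intros j; unfold shiftn; f_equal; lia. Qed.

Lemma shiftn_0 {B} (y : Z -> B) : shiftn 0 y = y.
Proof. apply functional_extensionality; intros j; unfold shiftn; f_equal; lia. Qed.

Lemma shiftn_period {B} (L : Z) (y : Z -> B) :
  (forall i, y (i + L) = y i) -> forall i, shiftn i y = shiftn (i mod L) y.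
Proof.
  intros Hper i.
  destruct (Z.eq_dec L 0) as [->|HL]; [rewrite Zmod_0_r; reflexivity |].
  assert (Hmul : forall (n : nat) r, y (r + L * Z.of_nat n) = y r).
  { induction n as [|n IH]; intros r.
    - rewrite Z.mul_0_r, Z.add_0_r; reflexivity.
    - rewrite <- (IH r), <- (Hper (r + L * Z.of_nat n)); f_equal; lia. }
  assert (Hq : forall q r, y (r + L * q) = y r).
  { intros q r; destruct (Z_le_gt_dec 0 q).
    - rewrite <- (Z2Nat.id q) by lia; apply Hmul.
    - rewrite <- (Hmul (Z.to_nat (- q)) (r + L * q)); f_equal.
      rewrite Z2Nat.id by lia; ring. }
  apply functional_extensionality; intros j; unfold shiftn.
  rewrite (Z.div_mod i L) at 1 by exact HL.
  rewrite <- (Hq (i / L) (j + i mod L)); f_equal; ring.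
Qed.

Lemma XK_shiftn {A} (Y : (Z -> A) -> Prop) x k : XK Y x -> XK Y (shiftn k x).
Proof.
  intros Hx i; unfold shiftn; destruct (Hx (i + k)) as [He Hc].
  split; [exact He |]; rewrite Hc; do 2 f_equal; lia.
Qed.

Lemma follower_spec {A} (Y : (Z -> A) -> Prop) y w : follower Y y w <-> Y (glue y w).
Proof.
  split; [intros [_ H]; exact H |]; intros H; split; [| exact H].
  exists (glue y w); split; [exact H |]; intros n; unfold glue.
  destruct (Z.ltb_spec (Z.of_nat n) 0); [lia |]; rewrite Nat2Z.id; reflexivity.
Qed.

Lemma follower_eq_past {A} (Y : (Z -> A) -> Prop) y y' :
  (forall r, r < 0 -> y r = y' r) -> follower Y y = follower Y y'.
Proof.
  intros H; apply functional_extensionality; intros w; unfold follower.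
  replace (glue y w) with (glue y' w); [reflexivity |].
  apply functional_extensionality; intros r; unfold glue.
  destruct (Z.ltb_spec r 0); [symmetry; apply H; lia | reflexivity].
Qed.

Lemma alphaY_eq_past {A} (Y : (Z -> A) -> Prop) y y' K :
  (forall r, r < K -> y r = y' r) -> forall i, i < K -> alphaY Y y i = alphaY Y y' i.
Proof.
  intros H i Hi; unfold alphaY; f_equal.
  - apply follower_eq_past; intros r Hr; unfold shiftn; apply H; lia.
  - apply H; lia.
Qed.

Lemma alphaY_shiftn {A} (Y : (Z -> A) -> Prop) y k i :
  alphaY Y (shiftn k y) i = alphaY Y y (i + k).
Proof. unfold alphaY; rewrite shiftn_add; reflexivity. Qed.

Lemma glue_self {A} (y : Z -> A) : glue y (fun n => y (Z.of_nat n)) = y.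
Proof.
  apply functional_extensionality; intros r; unfold glue.
  destruct (Z.ltb_spec r 0); [reflexivity | rewrite Z2Nat.id by lia; reflexivity].
Qed.

Definition prepend {B} (n : nat) (s u : nat -> B) : nat -> B :=
  fun k => if (k <? n)%nat then s k else u (k - n)%nat.

Lemma prepend_0 {B} (s u : nat -> B) : prepend 0 s u = u.
Proof.
  apply functional_extensionality; intros k; unfold prepend.
  destruct (Nat.ltb_spec k 0); [lia | f_equal; lia].
Qed.

Lemma prepend_acons {B} n (s u : nat -> B) : prepend n s (acons (s n) u) = prepend (S n) s u.
Proof.
  apply functional_extensionality; intros k; unfold prepend.
  destruct (Nat.ltb_spec k n), (Nat.ltb_spec k (S n)); try lia; try reflexivity.
  - replace k with n by lia; rewrite Nat.sub_diag; reflexivity.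
  - replace (k - n)%nat with (S (k - S n)) by lia; reflexivity.
Qed.

Definition splice {B} (K : Z) (u v : Z -> B) : Z -> B := fun r => if r <? K then u r else v r.

Lemma splice_lt {B} K (u v : Z -> B) r : r < K -> splice K u v r = u r.
Proof. intros H; unfold splice; destruct (Z.ltb_spec r K); [reflexivity | lia]. Qed.

Lemma splice_ge {B} K (u v : Z -> B) r : K <= r -> splice K u v r = v r.
Proof. intros H; unfold splice; destruct (Z.ltb_spec r K); [lia | reflexivity]. Qed.

Lemma periodic_shiftn {B} (p : Z -> B) k : periodic p -> periodic (shiftn k p).
Proof.
  intros [L [HL Hper]]; exists L; split; [exact HL |].
  intros i; unfold shiftn; rewrite <- (Hper (i + k)); f_equal; lia.
Qed.

Lemma periodic_alphaY {A} (Y : (Z -> A) -> Prop) p : periodic p -> periodic (alphaY Y p).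
Proof.
  intros [L [HL Hper]]; exists L; split; [exact HL |].
  intros i; unfold alphaY.
  rewrite Hper, <- shiftn_add, (shiftn_period L p Hper L), Z.mod_same, shiftn_0 by lia.
  reflexivity.
Qed.

Lemma compatible_metric_asymptotic {B} (X : (Z -> B) -> Prop) d u v K :
  compatible_metric X d -> (forall w k, X w -> X (shiftn k w)) -> X u -> X v -> periodic u ->
  (forall i, i < K -> v i = u i) ->
  forall eps, (0 < eps)%R -> exists I, forall i, i <= I ->
    (Rabs (d (shiftn i v) (shiftn i u)) < eps)%R.
Proof.
  intros [[Hnn [_ [Hsym _]]] Hcomp] Hshift Hu Hv [L [HL Hper]] Hvu eps Heps.
  destruct (list_common_bound (seq 0 (Z.to_nat L)) (fun t n => forall w, X w ->
      (forall j, - Z.of_nat n <= j <= Z.of_nat n -> w j = shiftn (Z.of_nat t) u j) ->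
      (d (shiftn (Z.of_nat t) u) w < eps)%R)) as [n Hn].
  - intros t n n' Hnn' Ht w Hw Hag; apply Ht; [exact Hw | intros j Hj; apply Hag; lia].
  - intros t _; destruct (proj1 (Hcomp _ (Hshift u (Z.of_nat t) Hu)) eps Heps) as [M HM].
    exists (Z.to_nat M); intros w Hw Hag; apply HM; [exact Hw | intros j Hj; apply Hag; lia].
  - exists (K - Z.of_nat n - 1); intros i Hi.
    assert (Hag : forall j, - Z.of_nat n <= j <= Z.of_nat n -> shiftn i v j = shiftn i u j)
      by (intros j Hj; apply Hvu; lia).
    rewrite (shiftn_period L u Hper i) in Hag |- *.
    pose proof (Z.mod_pos_bound i L HL).
    replace (i mod L) with (Z.of_nat (Z.to_nat (i mod L))) in Hag |- * by lia.
    rewrite Rabs_pos_eq, Hsym by (try apply Hnn; apply Hshift; assumption).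
    apply Hn; [apply in_seq; lia | apply Hshift, Hv | exact Hag].
Qed.

Lemma is_vertex_inhabited {A} (Y : (Z -> A) -> Prop) S : is_vertex Y S -> exists w, S w.
Proof.
  intros [y [Hy ->]]; exists (fun n => y (Z.of_nat n)).
  apply follower_spec; rewrite glue_self; exact Hy.
Qed.

Lemma XK_src_prepend_labels {A} (Y : (Z -> A) -> Prop) c :
  XK Y c -> forall n u, ke_src (c (Z.of_nat n)) u ->
  ke_src (c 0) (prepend n (fun k => LK c (Z.of_nat k)) u).
Proof.
  intros Hc; induction n as [|n IH]; intros u Hu.
  - rewrite prepend_0; exact Hu.
  - rewrite <- prepend_acons; apply IH.
    change (ke_tgt (c (Z.of_nat n)) u).
    rewrite (proj2 (Hc _)); rewrite Nat2Z.inj_succ in Hu; exact Hu.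
Qed.

Definition wrap (i j r : Z) : Z := i + (r - i) mod (j - i).

Lemma wrap_bounds i j r : i < j -> i <= wrap i j r < j.
Proof. intros H; unfold wrap; pose proof (Z.mod_pos_bound (r - i) (j - i)); lia. Qed.

Lemma wrap_id i j r : i <= r < j -> wrap i j r = r.
Proof. intros H; unfold wrap; rewrite Z.mod_small by lia; lia. Qed.

Lemma wrap_period i j r : i < j -> wrap i j (r + (j - i)) = wrap i j r.
Proof.
  intros H; unfold wrap.
  replace (r + (j - i) - i) with (r - i + 1 * (j - i)) by lia; rewrite Z_mod_plus_full; reflexivity.
Qed.

Lemma wrap_succ i j r : i < j ->
  (wrap i j r < j - 1 /\ wrap i j (r + 1) = wrap i j r + 1) \/
  (wrap i j r = j - 1 /\ wrap i j (r + 1) = i).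
Proof.
  intros H; unfold wrap; pose proof (Z.mod_pos_bound (r - i) (j - i)).
  replace (r + 1 - i) with (r - i + 1) by lia; rewrite <- Z.add_mod_idemp_l by lia.
  destruct (Z.eq_dec ((r - i) mod (j - i)) (j - i - 1)) as [e|ne].
  - right; rewrite e, Z.sub_add, Z.mod_same; lia.
  - left; rewrite (Z.mod_small ((r - i) mod (j - i) + 1)); lia.
Qed.

Section LabeledGraph.
Context {A : Type} (G : LGraph A).
Local Notation E := (lg_E G).
Local Notation V := (lg_V G).
Local Notation src := (lg_src G).
Local Notation tgt := (lg_tgt G).
Local Notation lab := (lg_lab G).

Definition label_shift (y : Z -> A) : Prop :=
  exists x, is_bipath G x /\ forall i, y i = lab (x i).

Lemma label_shift_shiftn y k : label_shift y -> label_shift (shiftn k y).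
Proof.
  intros [x [Hb Hl]]; exists (shiftn k x); split.
  - intros i; unfold shiftn; rewrite Hb; do 2 f_equal; lia.
  - intros i; unfold shiftn; apply Hl.
Qed.

Lemma label_shift_shiftn_iff y k : label_shift (shiftn k y) <-> label_shift y.
Proof.
  split; [| apply label_shift_shiftn]; intros H.
  apply (label_shift_shiftn _ (- k)) in H.
  rewrite shiftn_add, Z.add_opp_diag_l, shiftn_0 in H; exact H.
Qed.

Lemma ke_tgt_alphaY y i :
  ke_tgt (alphaY label_shift y i) = follower label_shift (shiftn (i + 1) y).
Proof.
  apply pred_ext; intros w; unfold ke_tgt; simpl; rewrite !follower_spec.
  replace (glue (shiftn i y) (acons (y i) w))
    with (shiftn (-1) (glue (shiftn (i + 1) y) w)); [apply label_shift_shiftn_iff |].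
  apply functional_extensionality; intros k; unfold glue, shiftn.
  destruct (Z.ltb_spec k 0), (Z.ltb_spec (k + -1) 0); try lia.
  - f_equal; lia.
  - replace (Z.to_nat k) with O by lia; cbn [acons]; f_equal; lia.
  - replace (Z.to_nat k) with (S (Z.to_nat (k + -1))) by lia; reflexivity.
Qed.

Lemma alphaY_XK y : label_shift y -> XK label_shift (alphaY label_shift y).
Proof.
  intros Hy i; split; [split |]; [| rewrite ke_tgt_alphaY .. ].
  - exists (shiftn i y); split; [apply label_shift_shiftn, Hy | reflexivity].
  - exists (shiftn (i + 1) y); split; [apply label_shift_shiftn, Hy | reflexivity].
  - reflexivity.
Qed.

Definition left_path_upto (y : Z -> A) (m : Z) (b : V) : Prop :=
  exists pi : Z -> E,
    (forall i, m <= i < -1 -> tgt (pi i) = src (pi (i + 1))) /\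
    (forall i, m <= i < 0 -> lab (pi i) = y i) /\ tgt (pi (-1)) = b.

Definition left_path (y : Z -> A) (b : V) : Prop :=
  exists pi : Z -> E,
    (forall i, i < -1 -> tgt (pi i) = src (pi (i + 1))) /\
    (forall i, i < 0 -> lab (pi i) = y i) /\ tgt (pi (-1)) = b.

Definition right_path_upto (w : nat -> A) (n : nat) (b : V) : Prop :=
  exists s : nat -> E, src (s O) = b /\
    forall k, (k <= n)%nat -> lab (s k) = w k /\ ((k < n)%nat -> tgt (s k) = src (s (S k))).

Definition right_path (w : nat -> A) (b : V) : Prop :=
  exists s : nat -> E, src (s O) = b /\ forall k, lab (s k) = w k /\ tgt (s k) = src (s (S k)).

Lemma left_path_upto_mono y m m' b : m' <= m -> left_path_upto y m' b -> left_path_upto y m b.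
Proof.
  intros H [pi [Hc [Hl Ht]]]; exists pi; split; [| split; [| exact Ht]].
  - intros i Hi; apply Hc; lia.
  - intros i Hi; apply Hl; lia.
Qed.

Lemma left_path_of_upto y b : (forall m, left_path_upto y m b) -> left_path y b.
Proof.
  intros H; destruct (lg_Efin G) as [le Hle].
  destruct (konig _ le Hle (fun e => tgt e = b /\ lab e = y (-1))
      (fun k e e' => tgt e' = src e /\ lab e' = y (-2 - Z.of_nat k)))
    as [f [[Hf0 Hl0] Hf]].
  - intros n; destruct (H (- Z.of_nat n - 1)) as [pi [Hc [Hl Ht]]].
    exists (fun k => pi (-1 - Z.of_nat k)); split.
    + split; [exact Ht | apply Hl; lia].
    + intros k Hk; split.
      * replace (-1 - Z.of_nat k) with (-1 - Z.of_nat (S k) + 1) by lia; apply Hc; lia.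
      * rewrite Hl by lia; f_equal; lia.
  - exists (fun r => f (Z.to_nat (-1 - r))); split; [| split].
    + intros r Hr; replace (Z.to_nat (-1 - r)) with (S (Z.to_nat (-1 - (r + 1)))) by lia.
      apply Hf.
    + intros r Hr; destruct (Z.to_nat (-1 - r)) as [|k] eqn:Ek.
      * replace r with (-1) by lia; exact Hl0.
      * rewrite (proj2 (Hf k)); f_equal; lia.
    + exact Hf0.
Qed.

Lemma right_path_of_upto w b : (forall n, right_path_upto w n b) -> right_path w b.
Proof.
  intros H; destruct (lg_Efin G) as [le Hle].
  destruct (konig _ le Hle (fun e => src e = b /\ lab e = w O)
      (fun k e e' => tgt e = src e' /\ lab e' = w (S k)))
    as [f [[Hf0 Hl0] Hf]].
  - intros n; destruct (H n) as [s [Hs0 Hs]]; exists s; split.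
    + split; [exact Hs0 | apply Hs; lia].
    + intros k Hk; split; [apply Hs; lia | apply Hs; lia].
  - exists f; split; [exact Hf0 |]; intros [|k]; split; try apply Hf; exact Hl0.
Qed.

Lemma glue_label_shift_iff y w :
  label_shift (glue y w) <-> exists b, left_path y b /\ right_path w b.
Proof.
  split.
  - intros [x [Hb Hl]]; exists (src (x 0)); split.
    + exists x; split; [intros i _; apply Hb | split; [| apply Hb]].
      intros i Hi; rewrite <- Hl; unfold glue; destruct (Z.ltb_spec i 0); [reflexivity | lia].
    + exists (fun n => x (Z.of_nat n)); split; [reflexivity |]; intros n; split.
      * rewrite <- Hl; unfold glue; destruct (Z.ltb_spec (Z.of_nat n) 0); [lia |].
        rewrite Nat2Z.id; reflexivity.
      * rewrite Nat2Z.inj_succ, <- Z.add_1_r; apply Hb.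
  - intros [b [[pi [Hc [Hl Ht]]] [f [Hf0 Hf]]]].
    exists (splice 0 pi (fun i => f (Z.to_nat i))); split.
    + intros i; unfold splice; destruct (Z.ltb_spec i 0), (Z.ltb_spec (i + 1) 0); try lia.
      * apply Hc; lia.
      * replace i with (-1) by lia; rewrite Ht, <- Hf0; reflexivity.
      * replace (Z.to_nat (i + 1)) with (S (Z.to_nat i)) by lia; apply Hf.
    + intros i; unfold glue, splice; destruct (Z.ltb_spec i 0).
      * symmetry; apply Hl; lia.
      * symmetry; apply Hf.
Qed.

Lemma follower_eq_of_left_paths y y' :
  (forall b, left_path y b <-> left_path y' b) -> follower label_shift y = follower label_shift y'.
Proof.
  intros H; apply pred_ext; intros w; rewrite !follower_spec, !glue_label_shift_iff.
  split; intros [b [H1 H2]]; exists b; split; try exact H2; apply H, H1.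
Qed.

Lemma label_shift_LK_of_alphaY_past c q :
  XK label_shift c -> (forall i, i < 0 -> c i = alphaY label_shift q i) ->
  label_shift (LK c).
Proof.
  intros Hc Hcq; destruct (lg_Vfin G) as [lv Hlv].
  set (ell := fun k : nat => LK c (Z.of_nat k)).
  assert (Hsrc0 : ke_src (c 0) = follower label_shift q).
  { change 0 with (-1 + 1); rewrite <- (proj2 (Hc (-1))), Hcq, ke_tgt_alphaY by lia.
    rewrite shiftn_0; reflexivity. }
  (* The vertex [c (n+1)] is nonempty, so some word of F(q) begins with the labels
     of [c] on [0, n]; finitely many junction vertices serve all [n]. *)
  assert (Hupto : forall n, exists b, In b lv /\ left_path q b /\ right_path_upto ell n b).
  { intros n; destruct (is_vertex_inhabited _ _ (proj1 (proj1 (Hc (Z.of_nat (S n))))))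
      as [u Hu].
    apply (XK_src_prepend_labels _ c Hc) in Hu.
    rewrite Hsrc0, follower_spec, glue_label_shift_iff in Hu.
    destruct Hu as [b [Hb [s [Hs0 Hs]]]].
    exists b; split; [apply Hlv |]; split; [exact Hb |].
    exists s; split; [exact Hs0 |]; intros k Hk; split; [| intros; apply Hs].
    rewrite (proj1 (Hs k)); unfold prepend; destruct (Nat.ltb_spec k (S n)); [reflexivity | lia]. }
  destruct (list_infinite_pigeonhole lv
      (fun b n => left_path q b /\ right_path_upto ell n b)) as [b [_ Hb]].
  - intros b n m Hmn [Hl [s [Hs0 Hs]]]; split; [exact Hl |].
    exists s; split; [exact Hs0 |]; intros k Hk; split; [apply Hs; lia | intros; apply Hs; lia].
  - exact Hupto.
  - replace (LK c) with (glue q ell).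
    + apply glue_label_shift_iff; exists b; split; [apply (Hb 0%nat) |].
      apply right_path_of_upto; intros n; apply Hb.
    + apply functional_extensionality; intros r; unfold glue, ell, LK.
      destruct (Z.ltb_spec r 0); [rewrite Hcq by lia | rewrite Z2Nat.id by lia]; reflexivity.
Qed.

Lemma label_shift_LK_of_alphaY_before c q K :
  XK label_shift c -> (forall i, i < K -> c i = alphaY label_shift q i) ->
  label_shift (LK c).
Proof.
  intros Hc Hcq.
  apply (label_shift_shiftn_iff _ K).
  apply (label_shift_LK_of_alphaY_past (shiftn K c) (shiftn K q)).
  - apply XK_shiftn, Hc.
  - intros i Hi; rewrite alphaY_shiftn; apply Hcq; lia.
Qed.

Lemma bipath_wrap (s : Z -> E) i j R :
  i < j <= R -> (forall r, r < R -> tgt (s r) = src (s (r + 1))) -> src (s i) = src (s j) ->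
  is_bipath G (fun r => s (wrap i j r)).
Proof.
  intros Hij Hs Hret r; destruct (wrap_succ i j r) as [[H1 H2]|[H1 H2]]; try lia.
  - rewrite H2; apply Hs; lia.
  - rewrite H2, H1, Hret; replace (s j) with (s (j - 1 + 1)) by (f_equal; lia).
    apply Hs; lia.
Qed.

Lemma path_splice_wrap (s : Z -> E) i j R :
  i < j <= R -> (forall r, r < R -> tgt (s r) = src (s (r + 1))) -> src (s i) = src (s j) ->
  forall r, r < R -> tgt (splice i (fun r => s (wrap i j r)) s r) =
                      src (splice i (fun r => s (wrap i j r)) s (r + 1)).
Proof.
  intros Hij Hs Hret r Hr; pose proof (bipath_wrap s i j R Hij Hs Hret r) as Hw.
  cbv beta in Hw.
  unfold splice; destruct (Z.ltb_spec r i), (Z.ltb_spec (r + 1) i); try lia.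
  - exact Hw.
  - rewrite (wrap_id i j (r + 1)) in Hw by lia; exact Hw.
  - apply Hs; lia.
Qed.

Lemma common_return_below (lv : list V) (fam : list (Z -> E)) m :
  (forall v, In v lv) -> exists i j, i < j <= m /\ forall s, In s fam -> src (s i) = src (s j).
Proof.
  intros Hlv.
  destruct (pigeonhole_family lv (map (fun s k => src (s (m - Z.of_nat k))) fam) Hlv)
    as [a [b [Hab Hret]]].
  exists (m - Z.of_nat b), (m - Z.of_nat a); split; [lia |].
  intros s Hs; symmetry; apply (Hret (fun k => src (s (m - Z.of_nat k)))).
  apply in_map_iff; exists s; split; [reflexivity | exact Hs].
Qed.

Lemma left_path_horizon y : exists m, forall b, left_path_upto y m b -> left_path y b.
Proof.
  destruct (lg_Vfin G) as [lv Hlv].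
  destruct (list_common_bound lv (fun b n => left_path_upto y (- Z.of_nat n) b -> left_path y b))
    as [n Hn].
  - intros b n n' Hnn' Hb Hup; apply Hb.
    apply (left_path_upto_mono _ _ (- Z.of_nat n')); [lia | exact Hup].
  - intros b _.
    destruct (classic (forall n : nat, left_path_upto y (- Z.of_nat n) b)) as [Hall|Hex].
    + exists 0%nat; intros _; apply left_path_of_upto; intros m.
      apply (left_path_upto_mono _ _ (- Z.of_nat (Z.to_nat (- m)))); [lia | apply Hall].
    + apply not_all_ex_not in Hex as [n Hn]; exists n; intros Hup; contradiction.
  - exists (- Z.of_nat n); intros b; apply Hn, Hlv.
Qed.

Lemma splice_wrap_labels (s : Z -> E) y i j R :
  i < j <= R -> (forall r, r < R -> lab (s r) = y r) ->
  forall r, r < R -> lab (splice i (fun r => s (wrap i j r)) s r) =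
                     splice i (fun r => y (wrap i j r)) y r.
Proof.
  intros Hij Hl r Hr; unfold splice; destruct (Z.ltb_spec r i); apply Hl; [| lia].
  pose proof (wrap_bounds i j r); lia.
Qed.

Lemma label_shift_wrap pi y i j :
  i < j -> is_bipath G pi -> (forall r, y r = lab (pi r)) -> src (pi i) = src (pi j) ->
  label_shift (fun r => y (wrap i j r)).
Proof.
  intros Hij Hpi Hl Hret; exists (fun r => pi (wrap i j r)); split; [| intros r; apply Hl].
  apply (bipath_wrap pi i j j); [lia | intros r _; apply Hpi | exact Hret].
Qed.

Lemma label_shift_splice_wrap pi y i j :
  i < j -> is_bipath G pi -> (forall r, y r = lab (pi r)) -> src (pi i) = src (pi j) ->
  label_shift (splice i (fun r => y (wrap i j r)) y).
Proof.
  intros Hij Hpi Hl Hret; exists (splice i (fun r => pi (wrap i j r)) pi); split.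
  - intros r; apply (path_splice_wrap pi i j (Z.max j (r + 1))); try lia; [| exact Hret].
    intros r' _; apply Hpi.
  - intros r; symmetry; apply (splice_wrap_labels pi y i j (Z.max j (r + 1))); try lia.
    intros r' _; symmetry; apply Hl.
Qed.

Lemma left_path_splice_wrap (s : Z -> E) y b i j :
  i < j <= -1 ->
  (forall r, r < -1 -> tgt (s r) = src (s (r + 1))) ->
  (forall r, r < 0 -> lab (s r) = y r) -> tgt (s (-1)) = b -> src (s i) = src (s j) ->
  left_path (splice i (fun r => y (wrap i j r)) y) b.
Proof.
  intros Hij Hc Hl Ht Hret; exists (splice i (fun r => s (wrap i j r)) s); split; [| split].
  - apply (path_splice_wrap s i j (-1)); assumption.
  - apply (splice_wrap_labels s y i j 0); [lia | exact Hl].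
  - rewrite splice_ge by lia; exact Ht.
Qed.

Lemma follower_eq_periodic_splice y :
  label_shift y -> exists p i, label_shift p /\ periodic p /\
    label_shift (splice i p y) /\ follower label_shift (splice i p y) = follower label_shift y.
Proof.
  intros [pi [Hpi Hl]]; destruct (lg_Vfin G) as [lv Hlv].
  destruct (left_path_horizon y) as [m Hm].
  assert (Hwit : forall b, exists s : Z -> E, left_path y b ->
    (forall r, r < -1 -> tgt (s r) = src (s (r + 1))) /\
    (forall r, r < 0 -> lab (s r) = y r) /\ tgt (s (-1)) = b).
  { intros b; destruct (classic (left_path y b)) as [[s Hs]|Hno].
    - exists s; intros _; exact Hs.
    - exists pi; intros Hb; contradiction. }
  destruct (choice _ Hwit) as [path_to Hpath_to].
  (* Returning below [m] leaves the splice equal to [y] on the horizon window [m, 0),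
     and below [-1] inside the domain of the chosen left paths. *)
  destruct (common_return_below lv (pi :: map path_to lv) (Z.min m (-1)) Hlv)
    as [i [j [Hij Hret]]].
  exists (fun r => y (wrap i j r)), i; split; [| split; [| split]].
  - apply (label_shift_wrap pi); [lia | exact Hpi | exact Hl | apply Hret; left; reflexivity].
  - exists (j - i); split; [lia | intros r; rewrite wrap_period by lia; reflexivity].
  - apply (label_shift_splice_wrap pi); [lia | exact Hpi | exact Hl |].
    apply Hret; left; reflexivity.
  - apply follower_eq_of_left_paths; intros b; split.
    + intros [s [Hc [Hls Ht]]]; apply Hm; exists s; split; [| split; [| exact Ht]].
      * intros r Hr; apply Hc; lia.
      * intros r Hr; rewrite Hls, splice_ge by lia; reflexivity.
    + intros Hb; destruct (Hpath_to b Hb) as [Hc [Hls Ht]].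
      apply (left_path_splice_wrap (path_to b)); try assumption; [lia |].
      apply Hret; right; apply in_map, Hlv.
Qed.

Lemma XK_splice_alphaY x z N :
  XK label_shift x -> label_shift z -> follower label_shift (shiftn N z) = ke_src (x N) ->
  XK label_shift (splice N (alphaY label_shift z) x).
Proof.
  intros Hx Hz Hsrc i; unfold splice.
  destruct (Z.ltb_spec i N), (Z.ltb_spec (i + 1) N); try lia.
  - apply alphaY_XK, Hz.
  - split; [apply alphaY_XK, Hz |].
    rewrite ke_tgt_alphaY; replace (i + 1) with N by lia; exact Hsrc.
  - apply Hx.
Qed.

Lemma regular_ray_of_alphaY_before x p K :
  (forall i, i < K -> x i = alphaY label_shift p i) -> regular_ray label_shift x.
Proof.
  intros Hxp; split.
  - intros z [Hz [M HM]]; split.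
    + apply (label_shift_LK_of_alphaY_before z p (Z.min M K) Hz).
      intros i Hi; rewrite HM, Hxp by lia; reflexivity.
    + exists M; intros i Hi; unfold LK; rewrite HM by exact Hi; reflexivity.
  - intros y [Hy [M HM]]; exists (alphaY label_shift y); split; [split |].
    + apply alphaY_XK, Hy.
    + exists (Z.min M K - 1); intros i Hi; rewrite Hxp by lia.
      apply (alphaY_eq_past _ y p (Z.min M K)); [| lia].
      intros r Hr; rewrite HM by lia; unfold LK; rewrite Hxp by lia; reflexivity.
    + reflexivity.
Qed.
End LabeledGraph.

Theorem lemma2p16 (A : Type) (Y : (Z -> A) -> Prop)
  (d : (Z -> KEdge A) -> (Z -> KEdge A) -> R) (x : Z -> KEdge A) (N : Z) :
  is_sofic Y -> compatible_metric (XK Y) d -> XK Y x ->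
  exists p x', Y p /\ periodic p /\ XK Y x' /\
    (forall i, N <= i -> x' i = x i) /\
    (forall eps, (0 < eps)%R -> exists I, forall i, i <= I ->
       (Rabs (d (shiftn i x') (shiftn i (alphaY Y p))) < eps)%R) /\
    regular_ray Y x'.
Proof.
  intros [_ [G HG]] Hd Hx.
  assert (HY : Y = label_shift G) by (apply pred_ext; exact HG); subst Y.
  destruct (proj1 (proj1 (Hx N))) as [y [Hy Hsrc]].
  destruct (follower_eq_periodic_splice G y Hy) as [p [i0 [Hp [Hper [Hz Hfz]]]]].
  set (z := shiftn (- N) (splice i0 p y)).
  set (x' := splice N (alphaY (label_shift G) z) x).
  assert (Hx'p : forall i, i < Z.min N (i0 + N) ->
                 x' i = alphaY (label_shift G) (shiftn (- N) p) i).
  { intros i Hi; unfold x'; rewrite splice_lt by lia.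
    apply (alphaY_eq_past _ _ _ (i0 + N)); [| lia].
    intros r Hr; unfold z, shiftn; apply splice_lt; lia. }
  assert (HX' : XK (label_shift G) x').
  { apply XK_splice_alphaY; [exact Hx | apply label_shift_shiftn, Hz |].
    unfold z; rewrite shiftn_add, Z.add_opp_diag_r, shiftn_0, Hfz; symmetry; exact Hsrc. }
  assert (Hp' : label_shift G (shiftn (- N) p)) by (apply label_shift_shiftn, Hp).
  exists (shiftn (- N) p), x'; split; [| split; [| split; [| split; [| split]]]].
  - exact Hp'.
  - apply periodic_shiftn, Hper.
  - exact HX'.
  - intros i Hi; apply splice_ge, Hi.
  - apply (compatible_metric_asymptotic _ d _ _ _ Hd (fun w k Hw => XK_shiftn _ w k Hw)
             (alphaY_XK G _ Hp') HX' (periodic_alphaY _ _ (periodic_shiftn _ _ Hper)) Hx'p).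
  - apply (regular_ray_of_alphaY_before G _ _ _ Hx'p).
Qed.
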